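(* Let $\phi:M_m\to M_n$ be a positive linear map. Then the dual face $L_\phi'$ meets the interior of the cone $\mathbb T$ if and only if both the product vectors in $P_\phi$ and their partial conjugates span the whole space $\mathbb C^n\otimes\mathbb C^m$. If moreover $\phi$ is exposed, then this is the case if and only if $\phi$ is indecomposable.
   Context: $M_k$ is the algebra of $k\times k$ complex matrices, $M_k^+$ its positive semi-definite cone, and $\mathbb V_1=M_n^+\otimes M_m^+\subset M_n\otimes M_m$ the separable cone. Pairing: $\langle y\otimes x,\phi\rangle=\mathrm{Tr}(\phi(x)y^{\mathrm t})$ for $x\in M_m,y\in M_n,\phi:M_m\to M_n$ linear, extended bilinearly. $\mathbb P_1$ is the cone of positive linear maps $M_m\to M_n$. $L_\phi=\{\lambda\phi:\lambda\ge0\}$ and $L_\phi'=\{A\in\mathbb V_1:\langle A,\phi\rangle=0\}$; for a face $G$ of $\mathbb V_1$, $G'=\{\psi\in\mathbb P_1:\langle A,\psi\rangle=0\ \forall A\in G\}$; $\phi$ is exposed if $L_\phi=L_\phi''$. $P_\phi$ is the set of product vectors $\bar y\otimes x\in\mathbb C^n\otimes\mathbb C^m$ ($x\in\mathbb C^m$, $y\in\mathbb C^n$) with $(\phi(xx^* )y\,|\,y)=0$, equivalently $\langle(\bar y\otimes x)(\bar y\otimes x)^*,\phi\rangle=0$; the partial conjugate of $\bar y\otimes x$ is $\bar y\otimes\bar x$. $\mathbb T$ is the cone of positive semi-definite $A\in M_n\otimes M_m$ whose partial transpose $A^\tau$ is also positive semi-definite; its interior (relative to its affine hull) consists of those $A\in\mathbb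 T$ for which both $A$ and $A^\tau$ have full range. A positive map is decomposable if it is a sum of maps $X\mapsto V^*XV$ and $X\mapsto W^*X^{\mathrm t}W$ ($V,W$ $m\times n$ matrices), and indecomposable otherwise. *)

From HB Require Import structures.
From mathcomp Require Import all_boot all_order all_algebra.
From mathcomp Require Import mxtens.
Set Implicit Arguments. Unset Strict Implicit. Unset Printing Implicit Defensive.
Import Order.TTheory GRing.Theory Num.Theory.
Local Open Scope ring_scope.

Section Defs.
Variable C : numClosedFieldType.

Definition adjmx {p q : nat} (A : 'M[C]_(p, q)) : 'M[C]_(q, p) :=
  (map_mx (fun z : C => z^*) A)^T.

Definition psd {k : nat} (A : 'M[C]_k) : Prop :=
  forall v : 'cV[C]_k, 0 <= (adjmx v *m A *m v) 0 0.

Definition positive_map {m n : nat} (phi : 'M[C]_m -> 'M[C]_n) : Prop :=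
  forall x : 'M[C]_m, psd x -> psd (phi x).

(* M_n (x) M_m is realised as 'M_(n*m), the index (i,j) being
   mxtens_index (i, j); y (x) x is the Kronecker product  y *t x. *)

Definition inV1 {n m : nat} (A : 'M[C]_(n * m)) : Prop :=
  exists (k : nat) (Y : 'I_k -> 'M[C]_n) (X : 'I_k -> 'M[C]_m),
    (forall i, psd (Y i) /\ psd (X i)) /\ A = \sum_(i < k) (Y i *t X i).

(* the pairing <A, phi>, bilinear extension of <y (x) x, phi> = Tr(phi(x) y^t) *)
Definition pairing {n m : nat} (A : 'M[C]_(n * m))
    (phi : 'M[C]_m -> 'M[C]_n) : C :=
  \sum_(i < n) \sum_(k < n) \sum_(j < m) \sum_(l < m)
     A (mxtens_index (i, j)) (mxtens_index (k, l)) * phi (delta_mx j l) i k.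

Definition dual_face {n m : nat} (phi : 'M[C]_m -> 'M[C]_n)
    (A : 'M[C]_(n * m)) : Prop :=
  inV1 A /\ pairing A phi = 0.

(* partial transpose (on the second factor): (y (x) x)^tau = y (x) x^t *)
Definition ptrans {n m : nat} (A : 'M[C]_(n * m)) : 'M[C]_(n * m) :=
  \matrix_(p, q)
    A (mxtens_index ((mxtens_unindex p).1, (mxtens_unindex q).2))
      (mxtens_index ((mxtens_unindex q).1, (mxtens_unindex p).2)).

Definition in_int_T {n m : nat} (A : 'M[C]_(n * m)) : Prop :=
  [/\ psd A, psd (ptrans A), A \in unitmx & ptrans A \in unitmx].

Definition dual_face_meets_int_T {m n : nat}
    (phi : 'M[C]_m -> 'M[C]_n) : Prop :=
  exists A : 'M[C]_(n * m), dual_face phi A /\ in_int_T A.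

Definition prodvec {n m : nat} (y : 'cV[C]_n) (x : 'cV[C]_m) : 'cV[C]_(n * m) :=
  \col_p ((y (mxtens_unindex p).1 0)^* * x (mxtens_unindex p).2 0).
Definition prodvec_pconj {n m : nat} (y : 'cV[C]_n) (x : 'cV[C]_m) : 'cV[C]_(n * m) :=
  \col_p ((y (mxtens_unindex p).1 0)^* * (x (mxtens_unindex p).2 0)^*).

Definition inP {m n : nat} (phi : 'M[C]_m -> 'M[C]_n)
    (y : 'cV[C]_n) (x : 'cV[C]_m) : Prop :=
  (adjmx y *m phi (x *m adjmx x) *m y) 0 0 = 0.

Definition Pvecs {m n : nat} (phi : 'M[C]_m -> 'M[C]_n) (z : 'cV[C]_(n * m)) : Prop :=
  exists (y : 'cV[C]_n) (x : 'cV[C]_m), inP phi y x /\ z = prodvec y x.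
Definition Pvecs_pconj {m n : nat} (phi : 'M[C]_m -> 'M[C]_n) (z : 'cV[C]_(n * m)) : Prop :=
  exists (y : 'cV[C]_n) (x : 'cV[C]_m), inP phi y x /\ z = prodvec_pconj y x.

Definition spans_all {N : nat} (S : 'cV[C]_N -> Prop) : Prop :=
  forall v : 'cV[C]_N, exists (k : nat) (c : 'I_k -> C) (z : 'I_k -> 'cV[C]_N),
    (forall i, S (z i)) /\ v = \sum_(i < k) c i *: z i.

Definition decomposable {m n : nat} (phi : 'M[C]_m -> 'M[C]_n) : Prop :=
  exists (k : nat) (V W : 'I_k -> 'M[C]_(m, n)),
    forall X : 'M[C]_m,
      phi X = \sum_(i < k) (adjmx (V i) *m X *m V i + adjmx (W i) *m X^T *m W i).

(* exposed: L_phi = L_phi'' as subsets of the cone P_1 of positive maps *)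
Definition exposed {m n : nat} (phi : 'M[C]_m -> 'M[C]_n) : Prop :=
  forall psi : {linear 'M[C]_m -> 'M[C]_n}, positive_map psi ->
    ((exists lam : C, 0 <= lam /\ forall X, psi X = lam *: phi X) <->
     (forall A : 'M[C]_(n * m), dual_face phi A -> pairing A psi = 0)).

End Defs.

From HB Require Import structures.
From mathcomp Require Import all_boot all_order all_algebra.
From mathcomp Require Import mxtens.
From mathcomp Require Import zify ring.
From Stdlib Require Import Classical_Prop.
Import Order.TTheory GRing.Theory Num.Theory.
Local Open Scope ring_scope.
Set Implicit Arguments. Unset Strict Implicit. Unset Printing Implicit Defensive.

(* An element A of the dual face L_phi' is a sum of projections onto product
   vectors of P_phi, and A^tau is the sum of the projections onto their
   partial conjugates; so A and A^tau have full range only if P_phi and its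
   partial conjugates span.  Conversely, take such a sum maximising
   rank A + rank A^tau: no further projection can raise either rank, so the
   kernels of A and A^tau are orthogonal to P_phi and to its partial
   conjugates respectively, hence trivial when these sets span.
   The map X |-> V^* X V + W^* X^t W pairs with A to
   (vec V | A vec V) + (vec W | A^tau vec W).  For A in the interior of T this
   is positive unless V = W = 0, so a decomposable phi vanishing on A is 0.
   If instead A (resp. A^tau) has a kernel vector vec V, the map X |-> V^* X V
   (resp. V^* X^t V) vanishes on L_phi'; when phi is exposed it is then a
   positive multiple of phi, and phi is decomposable. *)

Section PositiveMaps.
Variable C : numClosedFieldType.

Lemma adjmx_mul p q r (M : 'M[C]_(p, q)) (M' : 'M[C]_(q, r)) :
  adjmx (M *m M') = adjmx M' *m adjmx M.
Proof. by rewrite /adjmx map_mxM trmx_mul. Qed.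

Lemma adjmxK p q (M : 'M[C]_(p, q)) : adjmx (adjmx M) = M.
Proof. by apply/matrixP=> i j; rewrite !mxE conjCK. Qed.

Lemma adjmxD p q (M M' : 'M[C]_(p, q)) : adjmx (M + M') = adjmx M + adjmx M'.
Proof. by apply/matrixP=> i j; rewrite !mxE rmorphD. Qed.

Lemma adjmxZ p q c (M : 'M[C]_(p, q)) : adjmx (c *: M) = c^* *: adjmx M.
Proof. by apply/matrixP=> i j; rewrite !mxE rmorphM. Qed.

Lemma adjmx_map_tr p q (M : 'M[C]_(p, q)) : adjmx M = map_mx Num.conj M^T.
Proof. by apply/matrixP => i j; rewrite !mxE. Qed.

Section InnerProduct.
Variable N : nat.
Implicit Types (A : 'M[C]_N) (u v w z : 'cV[C]_N).

Definition cdot w v : C := \sum_k (w k 0)^* * v k 0.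
Definition qform A v : C := (adjmx v *m A *m v) 0 0.
Definition outer w : 'M[C]_N := w *m adjmx w.

Lemma cdotE w v : (adjmx w *m v) 0 0 = cdot w v.
Proof. by rewrite mxE; apply: eq_bigr => k _; rewrite !mxE. Qed.

Lemma cdotC w v : cdot v w = (cdot w v)^*.
Proof.
rewrite /cdot rmorph_sum; apply: eq_bigr => k _.
by rewrite rmorphM /= conjCK mulrC.
Qed.

Lemma cdotDl z v u : cdot (v + u) z = cdot v z + cdot u z.
Proof.
rewrite /cdot -big_split; apply: eq_bigr => k _.
by rewrite mxE rmorphD mulrDl.
Qed.

Lemma cdotZl z v c : cdot (c *: v) z = c^* * cdot v z.
Proof.
rewrite /cdot mulr_sumr; apply: eq_bigr => k _.
by rewrite mxE rmorphM mulrA.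
Qed.

Lemma cdot0l z : cdot 0 z = 0.
Proof. by rewrite /cdot big1 // => k _; rewrite mxE rmorph0 mul0r. Qed.

Lemma cdot0r w : cdot w 0 = 0.
Proof. by rewrite /cdot big1 // => k _; rewrite mxE mulr0. Qed.

Lemma cdotvv_ge0 w : 0 <= cdot w w.
Proof. by apply: sumr_ge0 => k _; rewrite mulrC mul_conjC_ge0. Qed.

Lemma cdotvv_eq0 w : cdot w w = 0 -> w = 0.
Proof.
move=> w0; apply/matrixP => k j; rewrite ord1 mxE.
have ge0 i : xpredT i -> 0 <= (w i 0)^* * w i 0 by rewrite mulrC mul_conjC_ge0.
have /eqP := psumr_eq0P ge0 w0 (isT : xpredT k).
by rewrite mulrC mul_conjC_eq0 => /eqP.
Qed.

Lemma qformE A v : qform A v = \sum_k \sum_l (v k 0)^* * A k l * v l 0.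
Proof.
rewrite /qform mxE exchange_big /=; apply: eq_bigr => l _.
by rewrite mxE big_distrl /=; apply: eq_bigr => k _; rewrite !mxE.
Qed.

Lemma qform0 v : qform 0 v = 0.
Proof. by rewrite /qform mulmx0 mul0mx mxE. Qed.

Lemma qformD A B v : qform (A + B) v = qform A v + qform B v.
Proof. by rewrite /qform mulmxDr mulmxDl mxE. Qed.

Lemma qform_ker A v : A *m v = 0 -> qform A v = 0.
Proof. by rewrite /qform -mulmxA => ->; rewrite mulmx0 mxE. Qed.

Lemma outerE w i j : outer w i j = w i 0 * (w j 0)^*.
Proof. by rewrite /outer mxE big_ord1 !mxE. Qed.

Lemma outer_mul w v : outer w *m v = cdot w v *: w.
Proof.
by rewrite /outer -mulmxA [adjmx w *m v]mx11_scalar cdotE mul_mx_scalar.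
Qed.

Lemma qform_outer w v : qform (outer w) v = (cdot w v)^* * cdot w v.
Proof. by rewrite /qform -mulmxA outer_mul -scalemxAr mxE cdotE -cdotC mulrC. Qed.

Lemma qform_outer_ge0 w v : 0 <= qform (outer w) v.
Proof. by rewrite qform_outer mulrC mul_conjC_ge0. Qed.

Lemma qform_outer_eq0 w v : qform (outer w) v = 0 -> cdot w v = 0.
Proof. by rewrite qform_outer mulrC => /eqP; rewrite mul_conjC_eq0 => /eqP. Qed.

Lemma psd_outer w : psd (outer w).
Proof. exact: qform_outer_ge0. Qed.

End InnerProduct.

Section Gram.
Variable N : nat.
Variable S : 'cV[C]_N -> Prop.
Implicit Types (A : 'M[C]_N) (u v w z : 'cV[C]_N).

Inductive gram : 'M[C]_N -> Prop :=
 | gram0 : gram 0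
 | gramD1 A w : S w -> gram A -> gram (A + outer w).

Inductive inspan : 'cV[C]_N -> Prop :=
 | inspan0 : inspan 0
 | inspanD1 v c w : S w -> inspan v -> inspan (v + c *: w).

Lemma gram_qform_ge0 A : gram A -> forall v, 0 <= qform A v.
Proof.
elim=> [|A' w _ _ IH] v; first by rewrite qform0.
by rewrite qformD addr_ge0 // qform_outer_ge0.
Qed.

Lemma gram_qform_eq0 A : gram A -> forall v, qform A v = 0 -> A *m v = 0.
Proof.
elim=> [|A' w _ gA IH] v; first by rewrite mul0mx.
rewrite qformD => /eqP; rewrite paddr_eq0 ?(gram_qform_ge0 gA) ?qform_outer_ge0 //.
case/andP=> /eqP /IH A'v0 /eqP /qform_outer_eq0 wv0.
by rewrite mulmxDl A'v0 outer_mul wv0 scale0r addr0.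
Qed.

Lemma gramD1_ker A w v : gram A -> (A + outer w) *m v = 0 ->
  A *m v = 0 /\ cdot w v = 0.
Proof.
move=> gA /qform_ker /eqP; rewrite qformD.
rewrite paddr_eq0 ?(gram_qform_ge0 gA) ?qform_outer_ge0 //.
by case/andP=> /eqP /(gram_qform_eq0 gA) Av0 /eqP /qform_outer_eq0.
Qed.

Lemma gram_mul_inspan A u : gram A -> inspan (A *m u).
Proof.
elim=> [|A' w Sw _ IH]; first by rewrite mul0mx; apply: inspan0.
by rewrite mulmxDl outer_mul; apply: inspanD1.
Qed.

Lemma inspan_orth z v : (forall w, S w -> cdot w z = 0) -> inspan v -> cdot v z = 0.
Proof.
move=> Sz; elim=> [|v' c w Sw _ IH]; first exact: cdot0l.
by rewrite cdotDl cdotZl IH Sz // mulr0 addr0.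
Qed.

Lemma spans_allP : spans_all S <-> forall v, inspan v.
Proof.
split=> [spS v|spS v].
  have [k [c [z [Sz ->]]]] := spS v.
  elim/big_rec: _ => [|i v' _ IH]; first exact: inspan0.
  by rewrite addrC; apply: inspanD1.
elim: (spS v) => [|v' c w Sw _ [k [c' [z [Sz ->]]]]].
  by exists 0%N, (fun _ => 0), (fun _ => 0); split=> [[]//|]; rewrite big_ord0.
exists k.+1, (fun i => if unlift ord0 i is Some j then c' j else c).
exists (fun i => if unlift ord0 i is Some j then z j else w); split.
  by move=> i; case: unlift.
rewrite big_ord_recl /= unlift_none addrC; congr (_ + _).
by apply: eq_bigr => i _; rewrite liftK.
Qed.

End Gram.

Section KernelRank.
Variable N : nat.
Implicit Types (A B : 'M[C]_N) (v : 'cV[C]_N).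

Lemma unitmxNP A : reflect (exists2 v : 'cV[C]_N, v != 0 & A *m v = 0) (A \notin unitmx).
Proof.
rewrite unitmxE unitfE negbK -det_tr.
apply: (iffP det0P) => -[v nz vA0]; exists v^T.
- by rewrite trmx_eq0.
- by rewrite -[A]trmxK -trmx_mul vA0 trmx0.
- by rewrite trmx_eq0.
- by rewrite -trmx_mul vA0 trmx0.
Qed.

Lemma ker0_unitmx A : (forall v, A *m v = 0 -> v = 0) -> A \in unitmx.
Proof. by move=> ker0; apply: contraT => /unitmxNP [v /eqP nz /ker0]. Qed.

Lemma mulmx_eq0_kermx A v : (A *m v == 0) = (v^T <= kermx A^T)%MS.
Proof. by rewrite sub_kermx -trmx_mul trmx_eq0. Qed.

Lemma kermx_tr_sub A B : (forall v, B *m v = 0 -> A *m v = 0) ->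
  (kermx B^T <= kermx A^T)%MS.
Proof.
move=> kerBA; apply/row_subP => i; rewrite -[row i _]trmxK -mulmx_eq0_kermx.
by apply/eqP/kerBA/eqP; rewrite mulmx_eq0_kermx trmxK row_sub.
Qed.

Lemma mxrank_le_ker A B : (forall v, B *m v = 0 -> A *m v = 0) ->
  (\rank A <= \rank B)%N.
Proof.
move=> /kermx_tr_sub /mxrankS; rewrite !mxrank_ker !mxrank_tr.
by have := rank_leq_row A; have := rank_leq_row B; lia.
Qed.

Lemma ker_eq_of_mxrank A B : (forall v, B *m v = 0 -> A *m v = 0) ->
  \rank A = \rank B -> forall v, A *m v = 0 -> B *m v = 0.
Proof.
move=> kerBA rkAB; have subBA := kermx_tr_sub kerBA.
have := (mxrank_leqif_sup subBA).2; rewrite !mxrank_ker !mxrank_tr rkAB eqxx.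
move=> /esym subAB v /eqP; rewrite mulmx_eq0_kermx => Av0.
by apply/eqP; rewrite mulmx_eq0_kermx (submx_trans Av0 subAB).
Qed.

Lemma mxrank_gramD1 (S : 'cV[C]_N -> Prop) A w : gram S A ->
  (\rank A <= \rank (A + outer w)%R)%N.
Proof. by move=> gA; apply: mxrank_le_ker => v /(gramD1_ker gA) []. Qed.

Lemma gramD1_mxrank_orth (S : 'cV[C]_N -> Prop) A w : gram S A ->
  (\rank (A + outer w)%R <= \rank A)%N -> forall z, A *m z = 0 -> cdot w z = 0.
Proof.
move=> gA rkle z Az0.
have kerAw v : (A + outer w) *m v = 0 -> A *m v = 0 by case/(gramD1_ker gA).
have rkAw : \rank A = \rank (A + outer w)%R.
  by apply/anti_leq; rewrite rkle (mxrank_gramD1 w gA).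
by case: (gramD1_ker gA (ker_eq_of_mxrank kerAw rkAw Az0)).
Qed.

End KernelRank.

Section Tensor.
Variables n m : nat.
Implicit Types (A B : 'M[C]_(n * m)) (y : 'cV[C]_n) (x : 'cV[C]_m).

Lemma mxtens_ind (P : 'I_(n * m) -> Prop) :
  (forall i j, P (mxtens_index (i, j))) -> forall p, P p.
Proof. by move=> Pij p; rewrite -(mxtens_unindexK p); case: mxtens_unindex. Qed.

Lemma sum_mxtens (F : 'I_(n * m) -> C) :
  \sum_p F p = \sum_i \sum_j F (mxtens_index (i, j)).
Proof.
rewrite pair_big /= (reindex (@mxtens_index n m)) /=; last first.
  by exists (@mxtens_unindex n m) => p _; rewrite ?mxtens_indexK ?mxtens_unindexK.
by apply: eq_bigr => -[i j].
Qed.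

Lemma prodvecE y x i j : prodvec y x (mxtens_index (i, j)) 0 = (y i 0)^* * x j 0.
Proof. by rewrite mxE mxtens_indexK. Qed.

Lemma prodvec_pconjE y x i j :
  prodvec_pconj y x (mxtens_index (i, j)) 0 = (y i 0)^* * (x j 0)^*.
Proof. by rewrite mxE mxtens_indexK. Qed.

Lemma ptransE A i j k l :
  ptrans A (mxtens_index (i, j)) (mxtens_index (k, l)) =
  A (mxtens_index (i, l)) (mxtens_index (k, j)).
Proof. by rewrite mxE !mxtens_indexK. Qed.

Lemma ptrans0 : ptrans (0 : 'M[C]_(n * m)) = 0.
Proof. by apply/matrixP => p q; rewrite !mxE. Qed.

Lemma ptransD A B : ptrans (A + B) = ptrans A + ptrans B.
Proof. by apply/matrixP => p q; rewrite !mxE. Qed.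

Lemma ptrans_outer y x : ptrans (outer (prodvec y x)) = outer (prodvec_pconj y x).
Proof.
apply/matrixP; apply: mxtens_ind => i j; apply: mxtens_ind => k l.
rewrite ptransE !outerE !prodvecE !prodvec_pconjE !rmorphM /= !conjCK; ring.
Qed.

Lemma outer_prodvec y x : outer (prodvec y x) = outer (map_mx Num.conj y) *t outer x.
Proof.
apply/matrixP; apply: mxtens_ind => i j; apply: mxtens_ind => k l.
rewrite tensmxE !outerE !prodvecE !mxE !rmorphM /= !conjCK; ring.
Qed.

Lemma pairing_ext A (f g : 'M[C]_m -> 'M[C]_n) : f =1 g -> pairing A f = pairing A g.
Proof.
move=> fg; rewrite /pairing; apply: eq_bigr => i _; apply: eq_bigr => k _.
by apply: eq_bigr => j _; apply: eq_bigr => l _; rewrite fg.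
Qed.

Lemma pairingDl A B (f : 'M[C]_m -> 'M[C]_n) :
  pairing (A + B) f = pairing A f + pairing B f.
Proof.
rewrite /pairing -big_split; apply: eq_bigr => i _.
rewrite -big_split; apply: eq_bigr => k _.
rewrite -big_split; apply: eq_bigr => j _.
by rewrite -big_split; apply: eq_bigr => l _; rewrite mxE mulrDl.
Qed.

Lemma pairingDr A (f g : 'M[C]_m -> 'M[C]_n) :
  pairing A (fun X => f X + g X) = pairing A f + pairing A g.
Proof.
rewrite /pairing -big_split; apply: eq_bigr => i _.
rewrite -big_split; apply: eq_bigr => k _.
rewrite -big_split; apply: eq_bigr => j _.
by rewrite -big_split; apply: eq_bigr => l _; rewrite mxE mulrDr.
Qed.

Lemma pairing0l (f : 'M[C]_m -> 'M[C]_n) : pairing 0 f = 0.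
Proof.
rewrite /pairing big1 // => i _; rewrite big1 // => k _; rewrite big1 // => j _.
by rewrite big1 // => l _; rewrite mxE mul0r.
Qed.

Lemma pairing0r A : pairing A (fun _ => 0) = 0.
Proof.
rewrite /pairing big1 // => i _; rewrite big1 // => k _; rewrite big1 // => j _.
by rewrite big1 // => l _; rewrite mxE mulr0.
Qed.

Lemma pairing_sumr A k (F : 'I_k -> 'M[C]_m -> 'M[C]_n) :
  pairing A (fun X => \sum_(i < k) F i X) = \sum_(i < k) pairing A (F i).
Proof.
elim: k F => [|k IH] F.
  by rewrite big_ord0 -(pairing0r A); apply: pairing_ext => X; rewrite big_ord0.
rewrite big_ord_recr /= -IH -pairingDr.
by apply: pairing_ext => X; rewrite big_ord_recr.
Qed.

Lemma pairing_trmx A (f : 'M[C]_m -> 'M[C]_n) :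
  pairing A (fun X => f X^T) = pairing (ptrans A) f.
Proof.
rewrite /pairing; apply: eq_bigr => i _; apply: eq_bigr => k _.
rewrite exchange_big /=; apply: eq_bigr => l _; apply: eq_bigr => j _.
by rewrite ptransE trmx_delta.
Qed.

Lemma pairing_outer_prodvec (psi : {linear 'M[C]_m -> 'M[C]_n}) y x :
  pairing (outer (prodvec y x)) psi = qform (psi (outer x)) y.
Proof.
rewrite qformE /pairing; apply: eq_bigr => i _; apply: eq_bigr => k _.
rewrite [X in psi X](matrix_sum_delta (outer x)) linear_sum summxE.
rewrite big_distrr big_distrl; apply: eq_bigr => j _ /=.
rewrite linear_sum summxE big_distrr big_distrl; apply: eq_bigr => l _ /=.
rewrite outerE !prodvecE linearZ /= mxE outerE !rmorphM /= !conjCK; ring.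
Qed.

End Tensor.

Section ProductCone.
Variables n m : nat.
Variable Q : 'cV[C]_n -> 'cV[C]_m -> Prop.
Implicit Types (A B : 'M[C]_(n * m)) (y : 'cV[C]_n) (x : 'cV[C]_m).

Inductive cone : 'M[C]_(n * m) -> Prop :=
 | cone0 : cone 0
 | coneD1 A y x : Q y x -> cone A -> cone (A + outer (prodvec y x)).

Lemma coneD A B : cone A -> cone B -> cone (A + B).
Proof.
move=> cA; elim=> [|B' y x Qyx _ IH]; first by rewrite addr0.
by rewrite addrA; apply: coneD1.
Qed.

Lemma cone_sum I (r : seq I) (F : I -> 'M[C]_(n * m)) :
  (forall i, cone (F i)) -> cone (\sum_(i <- r) F i).
Proof. by move=> cF; apply: big_ind => //; [exact: cone0 | exact: coneD]. Qed.

Lemma cone_gram A : cone A ->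
  gram (fun w => exists y x, Q y x /\ w = prodvec y x) A.
Proof.
elim=> [|A' y x Qyx _ IH]; first exact: gram0.
by apply: gramD1 => //; exists y, x.
Qed.

Lemma cone_gram_ptrans A : cone A ->
  gram (fun w => exists y x, Q y x /\ w = prodvec_pconj y x) (ptrans A).
Proof.
elim=> [|A' y x Qyx _ IH]; first by rewrite ptrans0; exact: gram0.
by rewrite ptransD ptrans_outer; apply: gramD1 => //; exists y, x.
Qed.

Lemma cone_inV1 A : cone A -> inV1 A.
Proof.
elim=> [|A' y x _ _ [k [Y [X [psdYX ->]]]]].
  by exists 0%N, (fun _ => 0), (fun _ => 0); split=> [[]//|]; rewrite big_ord0.
exists k.+1, (fun i => if unlift ord0 i is Some j then Y j else outer (map_mx Num.conj y)).
exists (fun i => if unlift ord0 i is Some j then X j else outer x); split.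
  by move=> i; case: unlift => [j|]; [exact: psdYX | split; apply: psd_outer].
rewrite big_ord_recl /= unlift_none addrC outer_prodvec; congr (_ + _).
by apply: eq_bigr => i _; rewrite liftK.
Qed.

Lemma cone_pairing_ge0 A (phi : {linear 'M[C]_m -> 'M[C]_n}) :
  positive_map phi -> cone A -> 0 <= pairing A phi.
Proof.
move=> phi_pos; elim=> [|A' y x _ _ IH]; first by rewrite pairing0l.
by rewrite pairingDl pairing_outer_prodvec addr_ge0 // (phi_pos _ (psd_outer x)).
Qed.

Lemma cone_pairing_eq0 A (psi : {linear 'M[C]_m -> 'M[C]_n}) :
  (forall y x, Q y x -> qform (psi (outer x)) y = 0) -> cone A -> pairing A psi = 0.
Proof.
move=> psiQ; elim=> [|A' y x Qyx _ IH]; first by rewrite pairing0l.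
by rewrite pairingDl pairing_outer_prodvec IH psiQ // addr0.
Qed.

End ProductCone.

Section PsdFactor.
Variable N : nat.
Implicit Types (A : 'M[C]_N) (u v : 'cV[C]_N).

Lemma adjmx_delta (i : 'I_N) : adjmx (delta_mx i 0 : 'cV[C]_N) = delta_mx 0 i.
Proof.
apply/matrixP => p q; rewrite !mxE.
by case: (q == i); case: (p == 0); rewrite /= ?conjC0 ?conjC1.
Qed.

Lemma delta_mul_delta A (i j : 'I_N) :
  (delta_mx 0 i : 'rV[C]_N) *m A *m (delta_mx j 0 : 'cV[C]_N) = (A i j)%:M.
Proof. by rewrite -rowE -colE [LHS]mx11_scalar !mxE. Qed.

Lemma qform_pair A (i j : 'I_N) a b :
  qform A (a *: delta_mx i 0 + b *: delta_mx j 0) =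
  a^* * a * A i i + a^* * b * A i j + b^* * a * A j i + b^* * b * A j j.
Proof.
rewrite /qform adjmxD !adjmxZ !adjmx_delta !mulmxDl !mulmxDr.
rewrite -!scalemxAl -!scalemxAr !delta_mul_delta !mxE eqxx !mulr1n; ring.
Qed.

Lemma psd_herm A : psd A -> forall i j, (A j i)^* = A i j.
Proof.
move=> psdA i j.
have real u : (qform A u)^* = qform A u by apply/geC0_conj/psdA.
have := real (1 *: delta_mx i 0 + 1 *: delta_mx j 0).
have := real (1 *: delta_mx i 0 + 'i *: delta_mx j 0).
have := real (1 *: delta_mx i 0 + 0 *: delta_mx j 0).
have := real (0 *: delta_mx i 0 + 1 *: delta_mx j 0).
rewrite !qform_pair !rmorphD !rmorphM /= !conjCK !conjCi !rmorph1 !rmorph0.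
set a := A i j; set b := A j i; set aii := A i i; set ajj := A j j.
rewrite !(mul1r, mul0r, mulr0, addr0, add0r, mulr1) => e4 e3 e2 e1.
rewrite e3 e4 in e1 e2.
(* the real and imaginary parts of the polarisation identity *)
have re : a^* + b^* - a - b = (aii + a^* + b^* + ajj) - (aii + a + b + ajj) by ring.
have im : 'i * (b^* - a^* - a + b) = (aii + - 'i * a^* + 'i * b^* + 'i * - 'i * ajj) -
    (aii + 'i * a + - 'i * b + - 'i * 'i * ajj) by ring.
rewrite e1 subrr in re; rewrite e2 subrr in im.
move/eqP: im; rewrite mulf_eq0 (negbTE (@neq0Ci C)) /= => /eqP im.
have : (b^* - a) * 2 = (a^* + b^* - a - b) + (b^* - a^* - a + b) by ring.
by rewrite re im addr0 => /eqP; rewrite mulf_eq0 pnatr_eq0 orbF subr_eq0 => /eqP.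
Qed.

Lemma psd_factor A : psd A -> exists B : 'M[C]_N, A = adjmx B *m B.
Proof.
move=> psdA.
have hermA : map_mx Num.conj A^T = A by apply/matrixP => i j; rewrite !mxE psd_herm.
have /orthomx_spectralP : A \is normalmx by apply/normalmxP; rewrite hermA.
have unitP := spectral_unitarymx A.
set P := spectralmx A in unitP *; set d := spectral_diag A => defA.
rewrite invmx_unitary // -adjmx_map_tr in defA.
have PPt : P *m adjmx P = 1%:M by rewrite adjmx_map_tr; apply/unitarymxP.
have d_ge0 i : 0 <= d 0 i.
  have := psdA (adjmx P *m delta_mx i 0).
  rewrite adjmx_mul adjmxK adjmx_delta defA !mulmxA.
  rewrite -(mulmxA _ P) PPt mulmx1 -(mulmxA _ P) PPt mulmx1 delta_mul_delta.
  by rewrite !mxE eqxx mulr1n.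
exists (diag_mx (map_mx sqrtC d) *m P).
rewrite adjmx_mul -mulmxA [_ *m (_ *m P)]mulmxA.
suff -> : adjmx (diag_mx (map_mx sqrtC d)) *m diag_mx (map_mx sqrtC d) = diag_mx d.
  by rewrite defA mulmxA.
apply/matrixP => i j; rewrite mul_mx_diag !mxE.
have [->|_] := eqVneq j i; last by rewrite !mulr0n rmorph0 mul0r.
by rewrite !mulr1n geC0_conj ?sqrtC_ge0 // -expr2 sqrtCK.
Qed.

End PsdFactor.

Section SeparableCone.
Variables n m : nat.

Lemma tens_psd_cone (Y : 'M[C]_n) (X : 'M[C]_m) :
  psd Y -> psd X -> cone (fun _ _ => True) (Y *t X).
Proof.
move=> /psd_factor [B ->] /psd_factor [D ->].
pose y (r : 'I_n) : 'cV[C]_n := \col_i B r i.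
pose x (s : 'I_m) : 'cV[C]_m := \col_j (D s j)^*.
suff -> : (adjmx B *m B) *t (adjmx D *m D) = \sum_r \sum_s outer (prodvec (y r) (x s)).
  apply: cone_sum => r; apply: cone_sum => s.
  by rewrite -[outer _]add0r; apply: coneD1 => //; exact: cone0.
apply/matrixP; apply: mxtens_ind => i j; apply: mxtens_ind => k l.
rewrite tensmxE !mxE summxE mulr_suml; apply: eq_bigr => r _.
rewrite summxE mulr_sumr; apply: eq_bigr => s _.
rewrite outerE !prodvecE !mxE !rmorphM /= !conjCK; ring.
Qed.

Lemma inV1_cone (A : 'M[C]_(n * m)) : inV1 A -> cone (fun _ _ => True) A.
Proof.
case=> k [Y [X [psdYX ->]]]; apply: cone_sum => i.
by case: (psdYX i) => psdY psdX; apply: tens_psd_cone.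
Qed.

End SeparableCone.

Lemma dual_face_cone n m (phi : {linear 'M[C]_m -> 'M[C]_n}) A :
  positive_map phi -> dual_face phi A -> cone (inP phi) A.
Proof.
move=> phi_pos [/inV1_cone]; elim=> [|A' y x _ cA IH]; first by move=> _; exact: cone0.
have ge0A := cone_pairing_ge0 phi_pos cA.
have ge0yx : 0 <= qform (phi (outer x)) y by exact: (phi_pos _ (psd_outer x)).
rewrite pairingDl pairing_outer_prodvec => /eqP.
by rewrite paddr_eq0 // => /andP[/eqP /IH cA' /eqP yx0]; apply: coneD1.
Qed.

Lemma bounded_nat_max (P : nat -> Prop) b : (exists k, P k) ->
  (forall k, P k -> (k <= b)%N) -> exists k, P k /\ forall j, P j -> (j <= k)%N.
Proof.
elim: b => [|b IH] [k0 Pk0] Pb.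
  by exists k0; split=> // j /Pb; have := Pb _ Pk0; lia.
have [Pb1|nPb1] := classic (P b.+1); first by exists b.+1; split=> // j /Pb.
apply: IH; first by exists k0.
move=> k Pk; move: (Pb _ Pk); rewrite leq_eqVlt => /orP[/eqP ek|//].
by case: nPb1; rewrite -ek.
Qed.

Section MaximalCone.
Variables n m : nat.
Variable phi : {linear 'M[C]_m -> 'M[C]_n}.

Definition cone_rank (A : 'M[C]_(n * m)) := (\rank A + \rank (ptrans A))%N.

Lemma ex_max_cone_rank : exists A, cone (inP phi) A /\
  forall B, cone (inP phi) B -> (cone_rank B <= cone_rank A)%N.
Proof.
pose P k := exists A, cone (inP phi) A /\ k = cone_rank A.
have P0 : exists k, P k by exists (cone_rank 0), 0; split=> //; exact: cone0.
have Pbound k : P k -> (k <= n * m + n * m)%N.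
  case=> A [_ ->]; rewrite /cone_rank.
  by have := rank_leq_row A; have := rank_leq_row (ptrans A); lia.
have [_ [[A [cA ->]] Amax]] := bounded_nat_max P0 Pbound.
by exists A; split=> // B cB; apply: Amax; exists B.
Qed.

Lemma ex_cone_ker_orth : exists2 A, cone (inP phi) A &
  (forall z, A *m z = 0 -> forall w, Pvecs phi w -> cdot w z = 0) /\
  (forall z, ptrans A *m z = 0 -> forall w, Pvecs_pconj phi w -> cdot w z = 0).
Proof.
have [A [cA Amax]] := ex_max_cone_rank.
have gA := cone_gram cA; have gtA := cone_gram_ptrans cA.
exists A => //; split=> z Az0 _ [y [x [Pyx ->]]].
all: have := Amax _ (coneD1 Pyx cA); rewrite /cone_rank ptransD ptrans_outer.
all: have := mxrank_gramD1 (prodvec y x) gA.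
all: have := mxrank_gramD1 (prodvec_pconj y x) gtA => rk2 rk1 rkle.
- by apply: gramD1_mxrank_orth gA _ _ Az0; lia.
- by apply: gramD1_mxrank_orth gtA _ _ Az0; lia.
Qed.

End MaximalCone.

Section SpanningCriterion.
Variables n m : nat.
Variable phi : {linear 'M[C]_m -> 'M[C]_n}.
Hypothesis phi_pos : positive_map phi.

Lemma cone_unit_meets_int_T A : cone (inP phi) A ->
  A \in unitmx -> ptrans A \in unitmx -> dual_face_meets_int_T phi.
Proof.
move=> cA uA utA; exists A; split; split=> //.
- exact: cone_inV1 cA.
- by apply: cone_pairing_eq0 cA => y x.
- exact: gram_qform_ge0 (cone_gram cA).
- exact: gram_qform_ge0 (cone_gram_ptrans cA).
Qed.

Lemma meets_int_T_iff_spans : dual_face_meets_int_T phi <->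
  spans_all (Pvecs phi) /\ spans_all (Pvecs_pconj phi).
Proof.
split=> [[A [faceA [_ _ uA utA]]]|[spP spPc]].
  have cA := dual_face_cone phi_pos faceA.
  split; apply/spans_allP => v.
    by rewrite -(mulKVmx uA v); exact: gram_mul_inspan (cone_gram cA).
  by rewrite -(mulKVmx utA v); exact: gram_mul_inspan (cone_gram_ptrans cA).
have [A cA [orthP orthPc]] := ex_cone_ker_orth phi.
apply: (cone_unit_meets_int_T cA); apply: ker0_unitmx => z Az0; apply: cdotvv_eq0.
  exact: inspan_orth (orthP _ Az0) (proj1 (spans_allP _) spP z).
exact: inspan_orth (orthPc _ Az0) (proj1 (spans_allP _) spPc z).
Qed.

End SpanningCriterion.

Section DecomposableMap.
Variables m n : nat.
Variables V W : 'M[C]_(m, n).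

Definition decmap (X : 'M[C]_m) : 'M[C]_n :=
  adjmx V *m X *m V + adjmx W *m X^T *m W.

Fact decmap_is_linear : linear decmap.
Proof.
move=> a X Y; rewrite /decmap !(linearD, linearZ) /= !mulmxDl -!scalemxAl.
by rewrite addrACA.
Qed.

HB.instance Definition _ :=
  GRing.isLinear.Build C 'M[C]_m 'M[C]_n _ decmap decmap_is_linear.

End DecomposableMap.

Section Vectorization.
Variables n m : nat.
Implicit Types (A : 'M[C]_(n * m)) (V W : 'M[C]_(m, n)) (X : 'M[C]_m).
Implicit Types (y : 'cV[C]_n) (x : 'cV[C]_m) (z : 'cV[C]_(n * m)).

(* The transpose of V, read as a vector of C^n (x) C^m. *)
Definition vec_of_mx V : 'cV[C]_(n * m) :=
  \col_p V (mxtens_unindex p).2 (mxtens_unindex p).1.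

Definition mx_of_vec z : 'M[C]_(m, n) := \matrix_(j, i) z (mxtens_index (i, j)) 0.

Lemma vec_of_mxE V i j : vec_of_mx V (mxtens_index (i, j)) 0 = V j i.
Proof. by rewrite mxE mxtens_indexK. Qed.

Lemma vec_of_mx0 : vec_of_mx 0 = 0.
Proof. by apply/matrixP => p q; rewrite !mxE. Qed.

Lemma vec_of_mx_eq0 V : vec_of_mx V = 0 -> V = 0.
Proof.
move=> V0; apply/matrixP => j i.
by have := congr1 (fun z => z (mxtens_index (i, j)) 0) V0; rewrite /= !mxE mxtens_indexK.
Qed.

Lemma mx_of_vecK z : vec_of_mx (mx_of_vec z) = z.
Proof.
apply/matrixP => p q; rewrite ord1 !mxE.
by rewrite -[in LHS]surjective_pairing mxtens_unindexK.
Qed.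

Lemma mx_of_vec_eq0 z : mx_of_vec z = 0 -> z = 0.
Proof. by move=> z0; rewrite -(mx_of_vecK z) z0 vec_of_mx0. Qed.

Lemma pairing_adjmx_conj A V :
  pairing A (fun X => adjmx V *m X *m V) = qform A (vec_of_mx V).
Proof.
rewrite qformE sum_mxtens /pairing; apply: eq_bigr => i _.
rewrite exchange_big /=; apply: eq_bigr => j _.
rewrite sum_mxtens; apply: eq_bigr => k _; apply: eq_bigr => l _.
rewrite -(mul_delta_mx (0 : 'I_1)) mulmxA -colE -mulmxA -rowE mxE big_ord1.
by rewrite !vec_of_mxE !mxE; ring.
Qed.

Lemma pairing_decmap A V W :
  pairing A (decmap V W) = qform A (vec_of_mx V) + qform (ptrans A) (vec_of_mx W).
Proof.
rewrite pairingDr pairing_adjmx_conj.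
by rewrite (pairing_trmx A (fun X => adjmx W *m X *m W)) pairing_adjmx_conj.
Qed.

Lemma qform_adjmx_conj p q (V : 'M[C]_(p, q)) (X : 'M[C]_p) v :
  qform (adjmx V *m X *m V) v = qform X (V *m v).
Proof. by rewrite /qform adjmx_mul !mulmxA. Qed.

Lemma qform_trmx p (X : 'M[C]_p) u : qform X^T u = qform X (map_mx Num.conj u).
Proof.
rewrite !qformE exchange_big /=; apply: eq_bigr => l _; apply: eq_bigr => k _.
by rewrite !mxE conjCK; ring.
Qed.

Lemma decmap_pos V W : positive_map (decmap V W).
Proof.
move=> X psdX v; rewrite -/(qform _ _) qformD !qform_adjmx_conj qform_trmx.
by apply: addr_ge0; apply: psdX.
Qed.

Lemma outer_trmx p (u : 'cV[C]_p) : (outer u)^T = outer (map_mx Num.conj u).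
Proof. by apply/matrixP => i j; rewrite mxE !outerE !mxE conjCK mulrC. Qed.

Lemma cdot_mul_vec_of_mx V y x : cdot x (V *m y) = cdot (prodvec y x) (vec_of_mx V).
Proof.
rewrite /cdot sum_mxtens exchange_big /=; apply: eq_bigr => j _.
rewrite mxE mulr_sumr; apply: eq_bigr => i _.
by rewrite prodvecE vec_of_mxE rmorphM /= conjCK; ring.
Qed.

Lemma cdot_mul_vec_of_mx_pconj W y x :
  cdot (map_mx Num.conj x) (W *m y) = cdot (prodvec_pconj y x) (vec_of_mx W).
Proof.
rewrite /cdot sum_mxtens exchange_big /=; apply: eq_bigr => j _.
rewrite !mxE mulr_sumr; apply: eq_bigr => i _.
by rewrite prodvec_pconjE vec_of_mxE rmorphM /= !conjCK; ring.
Qed.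

Lemma qform_decmap_outer V W y x :
  qform (decmap V W (outer x)) y =
    (cdot (prodvec y x) (vec_of_mx V))^* * cdot (prodvec y x) (vec_of_mx V) +
    (cdot (prodvec_pconj y x) (vec_of_mx W))^* *
      cdot (prodvec_pconj y x) (vec_of_mx W).
Proof.
rewrite qformD !qform_adjmx_conj outer_trmx !qform_outer.
by rewrite cdot_mul_vec_of_mx cdot_mul_vec_of_mx_pconj.
Qed.

Lemma mxtrace_adjmx_mul V : \tr (adjmx V *m V) = cdot (vec_of_mx V) (vec_of_mx V).
Proof.
rewrite /cdot sum_mxtens; apply: eq_bigr => i _.
by rewrite mxE; apply: eq_bigr => j _; rewrite vec_of_mxE !mxE.
Qed.

Lemma decmap1_eq0 V W : decmap V W 1%:M = 0 -> V = 0 /\ W = 0.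
Proof.
rewrite /decmap trmx1 !mulmx1 => /(congr1 mxtrace).
rewrite mxtraceD !mxtrace_adjmx_mul mxtrace0 => /eqP.
rewrite paddr_eq0 ?cdotvv_ge0 // => /andP[/eqP V0 /eqP W0].
by split; apply/vec_of_mx_eq0/cdotvv_eq0.
Qed.

Lemma decomposable_decmap_scaled (phi : 'M[C]_m -> 'M[C]_n) V W (lam : C) :
  0 < lam -> decmap V W =1 (fun X => lam *: phi X) -> decomposable phi.
Proof.
move=> lam_gt0 phiVW; pose s := sqrtC lam^-1.
have ss : s^* * s = lam^-1.
  by rewrite geC0_conj ?sqrtC_ge0 ?invr_ge0 ?ltW // -expr2 sqrtCK.
exists 1%N, (fun _ => s *: V), (fun _ => s *: W) => X.
rewrite big_ord1 !adjmxZ -!scalemxAl -!scalemxAr !scalerA -scalerDr.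
by rewrite -[_ + _]/(decmap V W X) phiVW scalerA ss mulVf ?scale1r // gt_eqF.
Qed.

End Vectorization.

Section Indecomposability.
Variables n m : nat.
Variable phi : {linear 'M[C]_m -> 'M[C]_n}.
Hypothesis phi_pos : positive_map phi.

Lemma meets_int_T_indecomposable :
  dual_face_meets_int_T phi -> (exists X, phi X != 0) -> ~ decomposable phi.
Proof.
case=> A [faceA [_ _ uA utA]] [X0 phiX0] [k [V [W defphi]]].
have cA := dual_face_cone phi_pos faceA.
have gA := cone_gram cA; have gtA := cone_gram_ptrans cA.
have sum_eq0 : \sum_(i < k) (qform A (vec_of_mx (V i)) +
    qform (ptrans A) (vec_of_mx (W i))) = 0.
  apply: (etrans _ (proj2 faceA)); rewrite (pairing_ext _ defphi) pairing_sumr.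
  by apply: eq_bigr => i _; rewrite -pairing_decmap.
have term_ge0 i : xpredT i ->
    0 <= qform A (vec_of_mx (V i)) + qform (ptrans A) (vec_of_mx (W i)).
  by move=> _; rewrite addr_ge0 // ?(gram_qform_ge0 gA) ?(gram_qform_ge0 gtA).
have VW0 i : V i = 0 /\ W i = 0.
  move/eqP: (psumr_eq0P term_ge0 sum_eq0 (isT : xpredT i)).
  rewrite paddr_eq0 ?(gram_qform_ge0 gA) ?(gram_qform_ge0 gtA) //.
  case/andP=> /eqP /(gram_qform_eq0 gA) AV0 /eqP /(gram_qform_eq0 gtA) AW0.
  by split; apply: vec_of_mx_eq0; [rewrite -(mulKmx uA (vec_of_mx _)) AV0 |
    rewrite -(mulKmx utA (vec_of_mx _)) AW0]; rewrite mulmx0.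
case/eqP: phiX0; rewrite defphi big1 // => i _.
by case: (VW0 i) => -> ->; rewrite !mulmx0 addr0.
Qed.

Lemma decmap_dual_face_eq0 V W :
  (forall w, Pvecs phi w -> cdot w (vec_of_mx V) = 0) ->
  (forall w, Pvecs_pconj phi w -> cdot w (vec_of_mx W) = 0) ->
  forall A, dual_face phi A -> pairing A (decmap V W) = 0.
Proof.
move=> orthV orthW A /(dual_face_cone phi_pos); apply: cone_pairing_eq0 => y x Pyx.
rewrite qform_decmap_outer orthV ?orthW ?mulr0 ?addr0 //; by exists y, x.
Qed.

Lemma exposed_decomposable V W : exposed phi ->
  (forall A, dual_face phi A -> pairing A (decmap V W) = 0) -> ~ (V = 0 /\ W = 0) ->
  decomposable phi.
Proof.
move=> phi_exp face0 VW_neq0.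
have [lam [lam_ge0 VWlam]] := (phi_exp (decmap V W) (decmap_pos V W)).2 face0.
have [lam0|lam_neq0] := eqVneq lam 0.
  by case: VW_neq0; apply: decmap1_eq0; rewrite VWlam lam0 scale0r.
by apply: (decomposable_decmap_scaled _ VWlam); rewrite lt_def lam_neq0.
Qed.

Lemma exposed_indecomposable_meets_int_T :
  exposed phi -> ~ decomposable phi -> dual_face_meets_int_T phi.
Proof.
move=> phi_exp phi_indec; have [A cA [orthP orthPc]] := ex_cone_ker_orth phi.
have [uA|/unitmxNP [z z_neq0 Az0]] := boolP (A \in unitmx); last first.
  case: phi_indec; apply: (@exposed_decomposable (mx_of_vec z) 0) => //.
    by apply: decmap_dual_face_eq0 => w; rewrite ?mx_of_vecK ?vec_of_mx0 ?cdot0r //;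
      exact: orthP.
  by case=> /mx_of_vec_eq0 z0; rewrite z0 eqxx in z_neq0.
have [utA|/unitmxNP [z z_neq0 tAz0]] := boolP (ptrans A \in unitmx); last first.
  case: phi_indec; apply: (@exposed_decomposable 0 (mx_of_vec z)) => //.
    by apply: decmap_dual_face_eq0 => w; rewrite ?mx_of_vecK ?vec_of_mx0 ?cdot0r //;
      exact: orthPc.
  by case=> _ /mx_of_vec_eq0 z0; rewrite z0 eqxx in z_neq0.
exact: cone_unit_meets_int_T cA uA utA.
Qed.

End Indecomposability.

End PositiveMaps.

Theorem proposition3p1 (C : numClosedFieldType) (m n : nat)
    (hm : (0 < m)%N) (hn : (0 < n)%N)
    (phi : {linear 'M[C]_m -> 'M[C]_n}) (hpos : positive_map phi) :
  (dual_face_meets_int_T phi <-> spans_all (Pvecs phi) /\ spans_all (Pvecs_pconj phi)) /\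
  ((exists X : 'M[C]_m, phi X != 0) -> exposed phi ->
     (dual_face_meets_int_T phi <-> ~ decomposable phi)).
Proof.
split; first exact: meets_int_T_iff_spans.
move=> phi_neq0 phi_exp; split.
  by move=> meets; apply: meets_int_T_indecomposable.
exact: exposed_indecomposable_meets_int_T.
Qed.
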